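(* Let $A \in \mathbb{C}^{n\times n}$ and let $f(z)=\det(zI-A)$. Let $(\Gamma)$ be a closed piecewise $C^1$ Jordan curve in $\mathbb{C}$ containing no eigenvalue of $A$, and fix an origin $z_0\in(\Gamma)$. Let $\arg_0$ denote the continuous determination of the argument of $f$ along $(\Gamma)$ (i.e. the branch of $\arg(f(z))$, $z\in(\Gamma)$, obtained by continuously following $z$ along $(\Gamma)$) normalized by $\arg_0(f(z_0))=\mathrm{Arg}(f(z_0))$. For $z$ not an eigenvalue of $A$ let $R(z)=(zI-A)^{-1}$ and $\Phi_z(s)=\det(I+sR(z))$. Let $z$ and $h$ be such that the segment $[z,z+h]\subset(\Gamma)$. If $$|\mathrm{Arg}(\Phi_z(s))|<\pi \quad \text{for all } s\in[0,h]$$ (where $s\in[0,h]$ means $s=th$, $t\in[0,1]$), then $$\arg_0(f(z+h))=\arg_0(f(z))+\mathrm{Arg}(\Phi_z(h)).$$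
   Context: $\mathrm{Arg}(w)\in(-\pi,\pi]$ denotes the principal determination of the argument of a nonzero complex number $w$. Note that $f(z+h)=f(z)\,\Phi_z(h)$. *)

From HB Require Import structures.
From mathcomp Require Import all_boot all_order all_algebra.
From mathcomp Require Import complex.
From mathcomp Require Import all_classical all_reals all_analysis.
Import numFieldNormedType.Exports.
Set Implicit Arguments. Unset Strict Implicit. Unset Printing Implicit Defensive.
Import Order.TTheory GRing.Theory Num.Theory.
Local Open Scope ring_scope.
Local Open Scope classical_set_scope.
Local Open Scope complex_scope.

Section Defs.
Variable R : realType.
Local Notation C := R[i].

Definition cmod (w : C) : R := Num.sqrt (complex.Re w ^+ 2 + complex.Im w ^+ 2).

(* principal determination of the argument, with values in (-pi, pi]
   (for w <> 0). *)
Definition Arg (w : C) : R :=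
  if 0 <= complex.Im w then acos (complex.Re w / cmod w)
  else - acos (complex.Re w / cmod w).

Definition charf n (A : 'M[C]_n) (z : C) : C := \det (z%:M - A).

Definition resolv n (A : 'M[C]_n) (z : C) : 'M[C]_n := invmx (z%:M - A).

Definition Phi n (A : 'M[C]_n) (z s : C) : C := \det (1%:M + s *: resolv A z).

Definition C1fun (g : R -> R) : Prop :=
  (forall x : R, derivable g x 1) /\ continuous (fun x : R => (g^`()) x).

Definition C1_on (gamma : R -> C) (a b : R) : Prop :=
  exists gr gi : R -> R, C1fun gr /\ C1fun gi /\
    forall t, a <= t <= b -> gamma t = gr t +i* gi t.

Definition piecewise_C1 (gamma : R -> C) : Prop :=
  exists s : seq R,
    [/\ sorted <%R (0 :: rcons s 1),
        (forall x, x \in s -> 0 < x < 1) &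
        forall j, (j < (size s).+1)%N ->
          C1_on gamma (nth 0 (0 :: rcons s 1) j) (nth 0 (0 :: rcons s 1) j.+1)].

Definition jordan_curve (gamma : R -> C) : Prop :=
  [/\ piecewise_C1 gamma,
      gamma 0 = gamma 1 &
      {in `[0, 1[ &, injective gamma}].

Definition cont_arg (F : C -> C) (gamma : R -> C) (theta : R -> R) : Prop :=
  {within `[0, 1], continuous theta} /\
  forall t, 0 <= t <= 1 ->
    F (gamma t) = (cmod (F (gamma t)) * cos (theta t)) +i*
                  (cmod (F (gamma t)) * sin (theta t)).

End Defs.

From HB Require Import structures.
From mathcomp Require Import all_boot all_order all_algebra.
From mathcomp Require Import complex.
From mathcomp Require Import all_classical all_reals all_analysis.
From mathcomp Require Import ring lra.
Import numFieldNormedType.Exports.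
Set Implicit Arguments. Unset Strict Implicit. Unset Printing Implicit Defensive.
Import Order.TTheory GRing.Theory Num.Theory.
Local Open Scope ring_scope.
Local Open Scope classical_set_scope.
Local Open Scope complex_scope.

(* Write f (gamma t) = r t * e^(i theta t).  Since f (z + s) = f z * Phi_z s,
   the point Phi_z (gamma s - z) has modulus r s / r t1 and angle
   theta s - theta t1.  The hypothesis |Arg Phi_z| < pi on the segment says
   that this continuous increment never meets an odd multiple of pi; as it
   vanishes at t1, it therefore stays equal to its representative modulo 2 pi
   in (-pi, pi), which at t2 is Arg (Phi_z h). *)

Section Angles.
Variable R : realType.
Implicit Types x y t : R.

Lemma cos_eq1_sin0 x : cos x = 1 -> sin x = 0.
Proof. by move=> cx; apply/eqP; rewrite -sqrf_eq0 sin2cos2 cx expr1n subrr. Qed.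

Lemma cos_eq1_gap x y : cos x = 1 -> cos y = 1 -> x < y -> x + pi < y.
Proof.
move=> cx cy xy; rewrite ltNge; apply/negP => yx.
have : cos (y - x) < cos 0.
  rewrite ltr_cos ?in_itv /= ?lexx ?pi_ge0 //; try apply/andP; lra.
by rewrite cosB cx cy !cos_eq1_sin0 // cos0 mulr0 addr0 mulr1 ltxx.
Qed.

(* Two distinct values of G in 2 pi Z are at least 2 pi apart, so the IVT
   would produce a point where cos G = -1. *)
Lemma continuous_cos_eq1_const (G : R -> R) (a b : R) : a <= b ->
  {within `[a, b], continuous G} -> {in `[a, b]%R, forall s, cos (G s) = 1} ->
  G a = G b.
Proof.
move=> ab Gc G1; apply/eqP/negPn/negP => neq.
have [cGa cGb] : cos (G a) = 1 /\ cos (G b) = 1.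
  by split; apply: G1; rewrite bound_itvE.
set m := Num.min (G a) (G b); set M := Num.max (G a) (G b).
have [cm mM] : cos m = 1 /\ m + pi < M.
  rewrite /m /M; case: (ltrP (G a) (G b)) => [GaGb|GbGa]; split => //.
    exact: cos_eq1_gap.
  by apply: cos_eq1_gap; rewrite // lt_neqAle GbGa eq_sym neq.
have [c cI Gcpi] : exists2 c, c \in `[a, b]%R & G c = m + pi.
  by apply: IVT => //; rewrite -/m -/M ler_wpDr ?pi_ge0 // ltW.
by have := G1 c cI; rewrite Gcpi cosD cospi sinpi cm mulr0 subr0; lra.
Qed.

(* [wrap_angle x = 2 atan (tan (x/2))] is the representative of [x] modulo
   [2 pi] in [(-pi, pi)]; it is continuous wherever [x] is not an odd multiple
   of [pi]. *)
Definition wrap_angle x : R := atan (sin x / (1 + cos x)) *+ 2.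

Lemma sin_atan t : sin (atan t) = t * cos (atan t).
Proof.
have cos_gt0 : 0 < cos (atan t).
  by apply: cos_gt0_pihalf; rewrite atan_gtNpi2 atan_ltpi2.
by rewrite -{2}[t]atanK /tan divfK // gt_eqF.
Qed.

Lemma cos_atan2 t : cos (atan t) ^+ 2 = (1 + t ^+ 2)^-1.
Proof. by rewrite cos_atan exprVn sqr_sqrtr // addr_ge0 // sqr_ge0. Qed.

Lemma cos_sin_wrap_angle x : 1 + cos x != 0 ->
  cos (wrap_angle x) = cos x /\ sin (wrap_angle x) = sin x.
Proof.
move=> cx_neq0; rewrite /wrap_angle cos_mulr2n sin_mulr2n sin_atan mulrCA -expr2.
set t := sin x / (1 + cos x).
have -> : cos (atan t) ^+ 2 = (1 + cos x) / 2.
  rewrite cos_atan2 /t expr_div_n sin2cos2.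
  have -> : 1 + (1 - cos x ^+ 2) / (1 + cos x) ^+ 2 = 2 / (1 + cos x).
    by field; rewrite cx_neq0.
  by rewrite invf_div.
by rewrite {}/t; split; field.
Qed.

Lemma cos_sub_wrap_angle x : 1 + cos x != 0 -> cos (x - wrap_angle x) = 1.
Proof.
move=> /cos_sin_wrap_angle[cw sw].
by rewrite cosB cw sw -!expr2 cos2Dsin2.
Qed.

Lemma wrap_angle_itv x : - pi < wrap_angle x < pi.
Proof.
have lb := atan_gtNpi2 (sin x / (1 + cos x)).
have ub := atan_ltpi2 (sin x / (1 + cos x)).
rewrite /wrap_angle mulr2n; lra.
Qed.

Lemma wrap_angle0 : wrap_angle 0 = 0.
Proof. by rewrite /wrap_angle sin0 mul0r atan0 mul0rn. Qed.

Lemma continuous_wrap_angle x : 1 + cos x != 0 -> {for x, continuous wrap_angle}.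
Proof.
move=> cx_neq0.
have tan_half : (fun y => sin y / (1 + cos y)) @ x --> sin x / (1 + cos x).
  apply: cvgM; first exact: continuous_sin.
  by apply: cvgV => //; apply: cvgD; [exact: cvg_cst | exact: continuous_cos].
exact: (cvgMn (n := 2) (continuous_comp tan_half (@continuous_atan R _))).
Qed.

Lemma continuous_sub_wrap_angle x : 1 + cos x != 0 ->
  {for x, continuous (fun y => y - wrap_angle y)}.
Proof. by move=> cx_neq0; apply: cvgB; [exact: cvg_id | exact: continuous_wrap_angle]. Qed.

Lemma continuous_cos_eq1_eq (G : R -> R) x y :
  {within `[Num.min x y, Num.max x y], continuous G} ->
  {in `[Num.min x y, Num.max x y]%R, forall s, cos (G s) = 1} ->
  G x = G y.
Proof.
case: (lerP x y) => [xy|yx] Gc G1; first exact: continuous_cos_eq1_const.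
by symmetry; apply: continuous_cos_eq1_const => //; exact: ltW.
Qed.

Lemma wrap_angle_increment (theta : R -> R) x y :
  {within `[Num.min x y, Num.max x y], continuous theta} ->
  {in `[Num.min x y, Num.max x y]%R, forall s, 1 + cos (theta s - theta x) != 0} ->
  wrap_angle (theta y - theta x) = theta y - theta x.
Proof.
move=> theta_cont no_half_turn.
pose G s := (theta s - theta x) - wrap_angle (theta s - theta x).
have G_eq : G x = G y.
  apply: continuous_cos_eq1_eq => [|s sI]; last exact/cos_sub_wrap_angle/no_half_turn.
  rewrite continuous_subspace_in => s; rewrite inE /= => sI.
  have shift : (fun t => t - theta x) @ theta s --> theta s - theta x.
    by apply: cvgB; [exact: cvg_id | exact: cvg_cst].
  have := continuous_comp shift (continuous_sub_wrap_angle (no_half_turn s sI)).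
  exact: continuous_comp (theta_cont s).
by apply/esym/eqP; rewrite -subr_eq0 -/(G y) -G_eq /G subrr wrap_angle0 subrr.
Qed.

End Angles.

Section Polar.
Variable R : realType.
Local Notation C := R[i].
Implicit Types (r x : R) (w : C).

(* [cont_arg F gamma theta] unfolds to [F (gamma t) = polar (cmod (F (gamma t))) (theta t)]. *)
Definition polar r x : C := (r * cos x) +i* (r * sin x).

Lemma polarM r1 r2 x1 x2 : polar r1 x1 * polar r2 x2 = polar (r1 * r2) (x1 + x2).
Proof.
by rewrite /polar cosD sinD; apply/eqP; rewrite eq_complex /=; apply/andP; split; apply/eqP; ring.
Qed.

Lemma cmod_gt0 w : w != 0 -> 0 < cmod w.
Proof.
move=> w_neq0; rewrite /cmod sqrtr_gt0 lt_neqAle addr_ge0 ?sqr_ge0 // andbT eq_sym.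
apply: contra w_neq0; rewrite paddr_eq0 ?sqr_ge0 // !sqrf_eq0.
by case: w => a b /= /andP[/eqP-> /eqP->].
Qed.

Lemma cmod_polar r x : 0 <= r -> cmod (polar r x) = r.
Proof.
move=> r_ge0; rewrite /cmod /polar /= !exprMn -mulrDr cos2Dsin2 mulr1.
by rewrite sqrtr_sqr ger0_norm.
Qed.

Lemma polar_neq0 r x : 0 < r -> polar r x != 0.
Proof.
move=> r_gt0; apply/eqP => p0; have := cmod_polar x (ltW r_gt0).
by rewrite p0 /cmod /= expr0n addr0 sqrtr0 => r0; rewrite -r0 ltxx in r_gt0.
Qed.

Lemma Arg_polar r x : 0 < r -> - pi < x < pi -> Arg (polar r x) = x.
Proof.
move=> r_gt0 /andP[lb ub]; rewrite /Arg (cmod_polar _ (ltW r_gt0)) /polar /=.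
rewrite mulrAC divff ?gt_eqF // mul1r pmulr_rge0 //.
case: ifPn => [sx_ge0|sx_lt0].
  have x_ge0 : 0 <= x.
    rewrite leNgt; apply/negP => x_lt0.
    by have := sin_gt0_pi (x := - x); rewrite sinN; lra.
  by rewrite cosK // in_itv /= x_ge0 ltW.
have x_lt0 : x < 0.
  rewrite ltNge; apply/negP => x_ge0.
  by have := sin_ge0_pi (x := x); lra.
by rewrite cosKN ?opprK //; lra.
Qed.

Lemma Arg_polar_pi r x : 0 < r -> cos x = -1 -> Arg (polar r x) = pi.
Proof.
move=> r_gt0 cx; have sx : sin x = 0.
  by apply/eqP; rewrite -sqrf_eq0 sin2cos2 cx sqrrN expr1n subrr.
rewrite /Arg (cmod_polar _ (ltW r_gt0)) /polar /= sx mulr0 lexx cx mulrN1 mulNr.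
by rewrite divff ?gt_eqF // acosN1.
Qed.

Lemma Arg_polar_lt_pi r x : 0 < r -> `|Arg (polar r x)| < pi -> 1 + cos x != 0.
Proof.
move=> r_gt0; apply: contraTneq => cx_eqN1.
by rewrite Arg_polar_pi ?ger0_norm ?pi_ge0 ?ltxx //; lra.
Qed.

End Polar.

Section CharPoly.
Variables (R : realType) (n : nat) (A : 'M[R[i]]_n).

Lemma charf_neq0 w : ~~ eigenvalue A w -> charf A w != 0.
Proof.
rewrite /eigenvalue /eigenspace negbK kermx_eq0 row_free_unit unitmxE unitfE.
rewrite /charf -opprB -scaleN1r detZ mulf_eq0 negb_or expf_eq0 oppr_eq0 oner_eq0.
by rewrite andbF => /andP[].
Qed.

Lemma charfD_Phi w s : charf A w != 0 -> charf A (w + s) = charf A w * Phi A w s.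
Proof.
move=> fw_neq0; rewrite /Phi /charf /resolv -det_mulmx mulmxDr mulmx1 -scalemxAr.
rewrite mulmxV ?unitmxE ?unitfE //.
by rewrite scalemx1 (raddfD (@scalar_mx _ n)) addrAC.
Qed.

Lemma Phi_polar w w' r r' x x' : 0 < r ->
  charf A w = polar r x -> charf A w' = polar r' x' ->
  Phi A w (w' - w) = polar (r' / r) (x' - x).
Proof.
move=> r_gt0 fw fw'.
have fw_neq0 : charf A w != 0 by rewrite fw polar_neq0.
apply: (mulfI fw_neq0); rewrite -charfD_Phi // addrC subrK fw' fw polarM.
by rewrite mulrC divfK ?gt_eqF // addrC subrK.
Qed.

End CharPoly.

Theorem lemma1 (R : realType) (n : nat) (A : 'M[R[i]]_n)
    (gamma : R -> R[i]) (theta : R -> R) (z h : R[i]) (t1 t2 : R) :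
  jordan_curve gamma ->
  (forall t, 0 <= t <= 1 -> ~~ eigenvalue A (gamma t)) ->
  cont_arg (charf A) gamma theta ->
  theta 0 = Arg (charf A (gamma 0)) ->
  0 <= t1 < 1 -> 0 <= t2 < 1 ->
  gamma t1 = z -> gamma t2 = z + h ->
  gamma @` `[Order.min t1 t2, Order.max t1 t2] =
    [set z + (u : R)%:C * h | u in `[0 : R, 1]] ->
  (forall u : R, 0 <= u <= 1 -> `|Arg (Phi A z (u%:C * h))| < pi) ->
  theta t2 = theta t1 + Arg (Phi A z h).
Proof.
move=> _ not_eig [theta_cont f_polar] _ /andP[t1_ge0 t1_lt1] /andP[t2_ge0 t2_lt1]
  z_def zh_def arc Phi_small.
have arc01 s : s \in `[Order.min t1 t2, Order.max t1 t2]%R -> 0 <= s <= 1.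
  by rewrite in_itv /= => /andP[]; case: (lerP t1 t2) => *; apply/andP; split; lra.
pose r t := cmod (charf A (gamma t)).
have r_gt0 t : 0 <= t <= 1 -> 0 < r t by move=> /not_eig/charf_neq0/cmod_gt0.
have t1I : 0 <= t1 <= 1 by apply/andP; split; lra.
have t2I : 0 <= t2 <= 1 by apply/andP; split; lra.
have r_ratio_gt0 t : 0 <= t <= 1 -> 0 < r t / r t1.
  by move=> tI; apply: divr_gt0; apply: r_gt0.
have Phi_arc t : 0 <= t <= 1 ->
    Phi A z (gamma t - z) = polar (r t / r t1) (theta t - theta t1).
  by move=> tI; rewrite -z_def; apply: Phi_polar; [exact: r_gt0 | exact: f_polar..].
have no_half_turn : {in `[Order.min t1 t2, Order.max t1 t2]%R,
    forall s, 1 + cos (theta s - theta t1) != 0}.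
  move=> s sI; have [u u01 gs] : [set z + (u : R)%:C * h | u in `[0 : R, 1]] (gamma s).
    by rewrite -arc; exists s.
  apply: (Arg_polar_lt_pi (r_ratio_gt0 s (arc01 s sI))).
  rewrite -Phi_arc ?arc01 // -gs addrC addKr; apply: Phi_small.
  by move: u01 => /=; rewrite in_itv.
have arc_cont : {within `[Order.min t1 t2, Order.max t1 t2], continuous theta}.
  by apply: continuous_subspaceW theta_cont => s /= /arc01; rewrite in_itv.
have wrap_t2 := wrap_angle_increment arc_cont no_half_turn.
have -> : h = gamma t2 - z by rewrite zh_def addrC addKr.
rewrite Phi_arc // Arg_polar ?r_ratio_gt0 //; first by rewrite addrC subrK.
by rewrite -wrap_t2 wrap_angle_itv.
Qed.
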